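(* Let $x_1\le x_2\le\dots\le x_n$ and $y_1\le y_2\le\dots\le y_n$ be real numbers. Set $\mu=\frac1n\sum_{i=1}^n\delta_{x_i}$ and $\nu=\frac1n\sum_{i=1}^n\delta_{y_i}$, and let $\theta$ be a strictly convex cost function. The following are equivalent: (i) the map $i\mapsto x_i-y_i$ is non-decreasing; (ii) $\overline{\mathcal{T}}_\theta(\nu|\mu)=\mathcal{T}_\theta(\nu,\mu)$.
   Context: A cost function is an even convex function $\theta:\mathbb{R}\to[0,\infty)$ with $\theta(0)=0$. The weak transport cost is $$\overline{\mathcal{T}}_\theta(\nu|\mu)=\inf_\pi\int\theta\big(|x-\textstyle\int y\,p(x,dy)|\big)\,\mu(dx),$$ with the infimum over couplings $\pi(dx\,dy)=\mu(dx)p(x,dy)$ with marginals $\mu$ and $\nu$. The classical transport cost is $\mathcal{T}_\theta(\nu,\mu)=\inf_\pi\int\theta(|x-y|)\,d\pi$. *)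

From Stdlib Require Import Reals Lra.
Open Scope R_scope.

Fixpoint rsum (n : nat) (f : nat -> R) : R :=
  match n with O => 0 | S k => rsum k f + f k end.

Definition strictly_convex_cost (theta : R -> R) : Prop :=
  (forall x, 0 <= theta x) /\ theta 0 = 0 /\ (forall x, theta (- x) = theta x) /\
  (forall a b t, a <> b -> 0 < t < 1 ->
     theta (t * a + (1 - t) * b) < t * theta a + (1 - t) * theta b).

(* Couplings of mu = 1/n sum delta_{x_i} and nu = 1/n sum delta_{y_j}, parametrised
   by a matrix P : pi = sum_{i,j} P i j delta_{(x_i,y_j)}.  Every coupling of the
   two measures arises this way (atoms may be repeated). *)
Definition is_coupling (n : nat) (P : nat -> nat -> R) : Prop :=
  (forall i j, (i < n)%nat -> (j < n)%nat -> 0 <= P i j) /\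
  (forall i, (i < n)%nat -> rsum n (fun j => P i j) = / INR n) /\
  (forall j, (j < n)%nat -> rsum n (fun i => P i j) = / INR n).

Definition classical_cost (theta : R -> R) (n : nat) (x y : nat -> R)
  (P : nat -> nat -> R) : R :=
  rsum n (fun i => rsum n (fun j => P i j * theta (Rabs (x i - y j)))).

Definition mu_mass (n : nat) (x : nat -> R) (a : R) : R :=
  rsum n (fun k => if Req_EM_T (x k) a then / INR n else 0).

(* barycenter int y p(a,dy) of the disintegration kernel of pi at the point a:
   (int_{ {a} x R } y dpi) / mu({a}) *)
Definition kernel_bary (n : nat) (x y : nat -> R) (P : nat -> nat -> R) (a : R) : R :=
  rsum n (fun k => if Req_EM_T (x k) a then rsum n (fun j => P k j * y j) else 0)
  / mu_mass n x a.

Definition weak_cost (theta : R -> R) (n : nat) (x y : nat -> R)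
  (P : nat -> nat -> R) : R :=
  rsum n (fun i => / INR n * theta (Rabs (x i - kernel_bary n x y P (x i)))).

Definition is_inf (S : R -> Prop) (m : R) : Prop :=
  (forall s, S s -> m <= s) /\ (forall b, (forall s, S s -> b <= s) -> b <= m).

Definition weak_values theta n x y : R -> Prop :=
  fun c => exists P, is_coupling n P /\ c = weak_cost theta n x y P.
Definition classical_values theta n x y : R -> Prop :=
  fun c => exists P, is_coupling n P /\ c = classical_cost theta n x y P.

From Stdlib Require Import Reals Lra Lia.
Open Scope R_scope.

(** Write [d i := x i - y i]. The identity coupling has both classical and weak cost
    [sum_i theta (d i) / n], and since [theta (x i - y j)] is a Monge matrix it is
    classically optimal. Pooling the rows of a coupling over each atom of [mu] turns its
    weak cost into a "rowwise" cost, where each [x k] is matched with the barycenter of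
    its own row; by Jensen the weak cost of a coupling never exceeds its rowwise cost.
    If [d] is nondecreasing, supporting lines of [theta] at the [d k] together with the
    rearrangement inequality for couplings show that no rowwise cost is below the
    identity cost. If [d] drops between consecutive indices, exchanging a little mass
    between the two rows moves both residuals to their midpoint, and strict convexity
    pushes the rowwise, hence the weak, cost below the classical infimum. *)

Lemma rsum_ext n f g :
  (forall k, (k < n)%nat -> f k = g k) -> rsum n f = rsum n g.
Proof.
  induction n as [|n IH]; intros Hfg; simpl; [reflexivity|].
  rewrite IH by (intros; apply Hfg; lia). rewrite Hfg by lia. reflexivity.
Qed.

Lemma rsum_le n f g :
  (forall k, (k < n)%nat -> f k <= g k) -> rsum n f <= rsum n g.
Proof.
  induction n as [|n IH]; intros Hfg; simpl; [lra|].
  apply Rplus_le_compat; [apply IH; intros; apply Hfg|apply Hfg]; lia.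
Qed.

Lemma rsum_plus n f g : rsum n (fun k => f k + g k) = rsum n f + rsum n g.
Proof. induction n as [|n IH]; simpl; [ring|rewrite IH; ring]. Qed.

Lemma rsum_minus n f g : rsum n (fun k => f k - g k) = rsum n f - rsum n g.
Proof. induction n as [|n IH]; simpl; [ring|rewrite IH; ring]. Qed.

Lemma rsum_mult_l n a f : rsum n (fun k => a * f k) = a * rsum n f.
Proof. induction n as [|n IH]; simpl; [ring|rewrite IH; ring]. Qed.

Lemma rsum_eq0 n f : (forall k, (k < n)%nat -> f k = 0) -> rsum n f = 0.
Proof.
  intros Hf. rewrite (rsum_ext n f (fun k => 0 * f k)) by (intros; rewrite Hf by lia; ring).
  rewrite rsum_mult_l. ring.
Qed.

Lemma rsum_nonneg n f : (forall k, (k < n)%nat -> 0 <= f k) -> 0 <= rsum n f.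
Proof. intros Hf. rewrite <- (rsum_eq0 n (fun _ => 0)) by reflexivity. now apply rsum_le. Qed.

Lemma rsum_ge_term n f a :
  (forall k, (k < n)%nat -> 0 <= f k) -> (a < n)%nat -> f a <= rsum n f.
Proof.
  induction n as [|n IH]; intros Hf Ha; simpl; [lia|].
  destruct (Nat.eq_dec a n) as [->|Han].
  - assert (0 <= rsum n f) by (apply rsum_nonneg; intros; apply Hf; lia). lra.
  - assert (f a <= rsum n f) by (apply IH; [intros; apply Hf|]; lia).
    assert (0 <= f n) by (apply Hf; lia). lra.
Qed.

Lemma rsum_swap n m f :
  rsum n (fun i => rsum m (fun j => f i j)) = rsum m (fun j => rsum n (fun i => f i j)).
Proof.
  induction n as [|n IH]; simpl.
  - symmetry. now apply rsum_eq0.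
  - rewrite IH, <- rsum_plus. reflexivity.
Qed.

Definition kron (i j : nat) : R := if Nat.eqb i j then 1 else 0.

Lemma kron_sym i j : kron i j = kron j i.
Proof. unfold kron. now rewrite Nat.eqb_sym. Qed.

Lemma kron_diag i : kron i i = 1.
Proof. unfold kron. now rewrite Nat.eqb_refl. Qed.

Lemma kron_neq i j : i <> j -> kron i j = 0.
Proof. intros Hij. unfold kron. now destruct (Nat.eqb_spec i j). Qed.

Lemma rsum_kron n a f : (a < n)%nat -> rsum n (fun k => kron k a * f k) = f a.
Proof.
  induction n as [|n IH]; intros Ha; simpl; [lia|].
  destruct (Nat.eq_dec n a) as [->|Hna].
  - rewrite kron_diag, rsum_eq0; [ring|].
    intros k Hk. rewrite kron_neq by lia. ring.
  - rewrite IH, kron_neq by lia. ring.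
Qed.

Lemma rsum_kron1 n a : (a < n)%nat -> rsum n (fun k => kron k a) = 1.
Proof.
  intros Ha. rewrite (rsum_ext n _ (fun k => kron k a * 1)) by (intros; ring).
  now apply rsum_kron.
Qed.

Lemma rsum_supp2 n f a b :
  (a < n)%nat -> (b < n)%nat -> a <> b ->
  (forall k, (k < n)%nat -> k <> a -> k <> b -> f k = 0) ->
  rsum n f = f a + f b.
Proof.
  intros Ha Hb Hab Hf.
  rewrite (rsum_ext n f (fun k => kron k a * f a + kron k b * f b)).
  - rewrite rsum_plus.
    rewrite (rsum_ext n (fun k => kron k a * f a) (fun k => f a * kron k a)) by (intros; ring).
    rewrite (rsum_ext n (fun k => kron k b * f b) (fun k => f b * kron k b)) by (intros; ring).
    rewrite !rsum_mult_l, !rsum_kron1 by assumption. ring.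
  - intros k Hk.
    destruct (Nat.eq_dec k a) as [->|Hka]; [rewrite kron_diag, kron_neq by auto; ring|].
    destruct (Nat.eq_dec k b) as [->|Hkb]; [rewrite kron_diag, kron_neq by auto; ring|].
    rewrite !kron_neq, Hf by auto. ring.
Qed.

Definition nondecreasing_on (n : nat) (u : nat -> R) : Prop :=
  forall i j, (i <= j)%nat -> (j < n)%nat -> u i <= u j.

Lemma nondecreasing_on_succ n u :
  (forall k, (S k < n)%nat -> u k <= u (S k)) -> nondecreasing_on n u.
Proof.
  intros Hu i j Hij Hj. induction j as [|j IH].
  - replace i with 0%nat by lia. lra.
  - destruct (Nat.eq_dec i (S j)) as [->|Hi]; [lra|].
    pose proof (Hu j Hj). assert (u i <= u j) by (apply IH; lia). lra.
Qed.

Definition convex (f : R -> R) : Prop :=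
  forall a b t, 0 <= t <= 1 -> f (t * a + (1 - t) * b) <= t * f a + (1 - t) * f b.

Lemma strictly_convex_cost_convex th : strictly_convex_cost th -> convex th.
Proof.
  intros (_ & _ & _ & Hstrict) a b t Ht.
  destruct (Req_dec a b) as [<-|Hab].
  { replace (t * a + (1 - t) * a) with a by ring. right; ring. }
  destruct (Req_dec t 0) as [->|Ht0].
  { replace (0 * a + (1 - 0) * b) with b by ring. lra. }
  destruct (Req_dec t 1) as [->|Ht1].
  { replace (1 * a + (1 - 1) * b) with a by ring. lra. }
  apply Rlt_le, Hstrict; [exact Hab|lra].
Qed.

Lemma strictly_convex_cost_midpoint th a b :
  strictly_convex_cost th -> a <> b -> 2 * th ((a + b) / 2) < th a + th b.
Proof.
  intros (_ & _ & _ & Hstrict) Hab.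
  pose proof (Hstrict a b (1 / 2) Hab ltac:(lra)) as Hmid.
  replace ((a + b) / 2) with (1 / 2 * a + (1 - 1 / 2) * b) by field. lra.
Qed.

Lemma even_Rabs (f : R -> R) : (forall z, f (- z) = f z) -> forall z, f (Rabs z) = f z.
Proof. intros Heven z. unfold Rabs. destruct (Rcase_abs z); auto. Qed.

Section Convex.

Variable f : R -> R.
Hypothesis Hf : convex f.

Lemma convex_chord p v s :
  p <= v <= s -> (s - p) * f v <= (s - v) * f p + (v - p) * f s.
Proof.
  intros Hv. destruct (Req_dec p s) as [<-|Hps].
  { replace v with p by lra. lra. }
  set (t := (s - v) / (s - p)).
  assert (Ht : 0 <= t <= 1).
  { unfold t; split; apply (Rmult_le_reg_r (s - p)); try lra;
      replace ((s - v) / (s - p) * (s - p)) with (s - v) by (field; lra); lra. }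
  pose proof (Hf p s t Ht) as Hc.
  replace (t * p + (1 - t) * s) with v in Hc by (unfold t; field; lra).
  apply (Rmult_le_compat_l (s - p)) in Hc; [|lra].
  replace ((s - v) * f p + (v - p) * f s) with ((s - p) * (t * f p + (1 - t) * f s))
    by (unfold t; field; lra).
  exact Hc.
Qed.

(* [a - b] and [a' - b'] lie between [a - b'] and [a' - b] and have the same sum. *)
Lemma convex_monge a a' b b' :
  a <= a' -> b <= b' -> f (a - b) + f (a' - b') <= f (a - b') + f (a' - b).
Proof.
  intros Ha Hb. destruct (Req_dec (a' - b) (a - b')) as [Hdeg|Hne].
  { replace a' with a by lra. replace b' with b by lra. lra. }
  pose proof (convex_chord (a - b') (a - b) (a' - b) ltac:(lra)) as Hq.
  pose proof (convex_chord (a - b') (a' - b') (a' - b) ltac:(lra)) as Hr.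
  apply (Rmult_le_reg_l ((a' - b) - (a - b'))); lra.
Qed.

Definition left_slope (z q : R) : Prop := exists h, 0 < h /\ q * h = f z - f (z - h).

Lemma left_slope_bound z : bound (left_slope z).
Proof.
  exists (f (z + 1) - f z). intros q (h & Hh & Hq).
  pose proof (convex_chord (z - h) z (z + 1) ltac:(lra)) as Hchord.
  apply (Rmult_le_reg_r h); [exact Hh|]. lra.
Qed.

Lemma left_slope_inhabited z : exists q, left_slope z q.
Proof. exists (f z - f (z - 1)), 1. split; [lra|ring]. Qed.

Definition subgrad (z : R) : R :=
  proj1_sig (completeness (left_slope z) (left_slope_bound z) (left_slope_inhabited z)).

Lemma subgrad_lub z : is_lub (left_slope z) (subgrad z).
Proof. exact (proj2_sig (completeness _ _ _)). Qed.

Lemma subgrad_ge_left z0 z : z < z0 -> f z0 - f z <= subgrad z0 * (z0 - z).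
Proof.
  intros Hz.
  assert (Hq : left_slope z0 ((f z0 - f z) / (z0 - z))).
  { exists (z0 - z). split; [lra|]. replace (z0 - (z0 - z)) with z by ring. field. lra. }
  pose proof (proj1 (subgrad_lub z0) _ Hq) as Hle.
  apply (Rmult_le_compat_r (z0 - z)) in Hle; [|lra].
  replace ((f z0 - f z) / (z0 - z) * (z0 - z)) with (f z0 - f z) in Hle by (field; lra).
  exact Hle.
Qed.

Lemma subgrad_le_right z0 z : z0 < z -> subgrad z0 * (z - z0) <= f z - f z0.
Proof.
  intros Hz.
  assert (Hub : is_upper_bound (left_slope z0) ((f z - f z0) / (z - z0))).
  { intros q (h & Hh & Hq).
    pose proof (convex_chord (z0 - h) z0 z ltac:(lra)) as Hchord.
    apply (Rmult_le_reg_r ((z - z0) * h)); [nra|].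
    replace ((f z - f z0) / (z - z0) * ((z - z0) * h)) with ((f z - f z0) * h) by (field; lra).
    nra. }
  pose proof (proj2 (subgrad_lub z0) _ Hub) as Hle.
  apply (Rmult_le_compat_r (z - z0)) in Hle; [|lra].
  replace ((f z - f z0) / (z - z0) * (z - z0)) with (f z - f z0) in Hle by (field; lra).
  exact Hle.
Qed.

Lemma subgrad_supporting z0 z : f z0 + subgrad z0 * (z - z0) <= f z.
Proof.
  destruct (Rtotal_order z z0) as [Hlt|[->|Hgt]].
  - pose proof (subgrad_ge_left z0 z Hlt). lra.
  - lra.
  - pose proof (subgrad_le_right z0 z Hgt). lra.
Qed.

Lemma subgrad_nondecreasing z1 z2 : z1 <= z2 -> subgrad z1 <= subgrad z2.
Proof.
  intros Hz. destruct (Req_dec z1 z2) as [<-|Hne]; [lra|].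
  pose proof (subgrad_le_right z1 z2 ltac:(lra)).
  pose proof (subgrad_ge_left z2 z1 ltac:(lra)).
  apply (Rmult_le_reg_r (z2 - z1)); lra.
Qed.

Lemma jensen n w z :
  (forall k, (k < n)%nat -> 0 <= w k) -> rsum n w = 1 ->
  f (rsum n (fun k => w k * z k)) <= rsum n (fun k => w k * f (z k)).
Proof.
  intros Hw Hsum. set (z0 := rsum n (fun k => w k * z k)).
  apply Rle_trans with (rsum n (fun k => w k * (f z0 + subgrad z0 * (z k - z0)))).
  - rewrite (rsum_ext n _ (fun k => f z0 * w k + subgrad z0 * (w k * z k) - subgrad z0 * z0 * w k))
      by (intros; ring).
    rewrite rsum_minus, rsum_plus, !rsum_mult_l, Hsum. fold z0. lra.
  - apply rsum_le. intros k Hk. apply Rmult_le_compat_l; [now apply Hw|apply subgrad_supporting].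
Qed.

End Convex.

Lemma coupling_separable n P F G :
  is_coupling n P ->
  rsum n (fun i => rsum n (fun j => P i j * (F i + G j))) = / INR n * (rsum n F + rsum n G).
Proof.
  intros (_ & Hrow & Hcol).
  rewrite (rsum_ext n _ (fun i => F i * rsum n (fun j => P i j) + rsum n (fun j => P i j * G j)))
    by (intros; rewrite <- rsum_mult_l, <- rsum_plus; apply rsum_ext; intros; ring).
  rewrite rsum_plus, rsum_swap.
  rewrite (rsum_ext n (fun i => F i * rsum n (fun j => P i j)) (fun i => / INR n * F i))
    by (intros; rewrite Hrow by assumption; ring).
  rewrite (rsum_ext n (fun j => rsum n (fun i => P i j * G j)) (fun j => / INR n * G j)).
  - rewrite !rsum_mult_l. ring.
  - intros j Hj. rewrite (rsum_ext n _ (fun i => G j * P i j)) by (intros; ring).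
    rewrite rsum_mult_l, Hcol by assumption. ring.
Qed.

Section Monge.

Variables (n : nat) (c : nat -> nat -> R).
Hypothesis Hmonge : forall i i' j j', (i <= i')%nat -> (i' < n)%nat ->
  (j <= j')%nat -> (j' < n)%nat -> c i j + c i' j' <= c i j' + c i' j.

(* With [G j := c j j - monge_potential j], the pair [(monge_potential, G)] is a dual
   solution that is tight on the diagonal. *)
Definition monge_potential (i : nat) : R := rsum i (fun k => c (S k) k - c k k).

Lemma monge_potential_le i j : (i < n)%nat -> (j < n)%nat ->
  monge_potential i - monge_potential j <= c i j - c j j.
Proof.
  intros Hi Hj. destruct (Nat.le_gt_cases j i) as [Hji|Hij].
  - induction i as [|i IH]; [replace j with 0%nat by lia; lra|].
    destruct (Nat.eq_dec j (S i)) as [->|Hne]; [lra|].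
    pose proof (IH ltac:(lia) ltac:(lia)).
    pose proof (Hmonge i (S i) j i ltac:(lia) Hi ltac:(lia) ltac:(lia)).
    unfold monge_potential in *; simpl. lra.
  - induction j as [|j IH]; [lia|].
    destruct (Nat.eq_dec i j) as [->|Hne].
    + pose proof (Hmonge j (S j) j (S j) ltac:(lia) Hj ltac:(lia) Hj).
      unfold monge_potential; simpl. lra.
    + pose proof (IH ltac:(lia) ltac:(lia)).
      pose proof (Hmonge i (S j) j (S j) ltac:(lia) Hj ltac:(lia) Hj).
      unfold monge_potential in *; simpl. lra.
Qed.

Theorem monge_diag_optimal P : is_coupling n P ->
  rsum n (fun i => / INR n * c i i) <= rsum n (fun i => rsum n (fun j => P i j * c i j)).
Proof.
  intros HP.
  apply Rle_trans with
    (rsum n (fun i => rsum n (fun j => P i j * (monge_potential i + (c j j - monge_potential j))))).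
  - rewrite coupling_separable by assumption.
    rewrite <- rsum_plus, <- rsum_mult_l. apply Req_le, rsum_ext. intros; ring.
  - apply rsum_le; intros i Hi; apply rsum_le; intros j Hj.
    apply Rmult_le_compat_l; [now apply HP|].
    pose proof (monge_potential_le i j Hi Hj). lra.
Qed.

End Monge.

Lemma coupling_rearrangement n P s u :
  is_coupling n P -> nondecreasing_on n s -> nondecreasing_on n u ->
  rsum n (fun i => rsum n (fun j => P i j * (s i * u j)))
  <= rsum n (fun i => / INR n * (s i * u i)).
Proof.
  intros HP Hs Hu.
  assert (Hmonge : forall i i' j j', (i <= i')%nat -> (i' < n)%nat -> (j <= j')%nat ->
            (j' < n)%nat -> - (s i * u j) + - (s i' * u j') <= - (s i * u j') + - (s i' * u j)).
  { intros i i' j j' Hii' Hi' Hjj' Hj'.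
    assert (0 <= (s i' - s i) * (u j' - u j)).
    { apply Rmult_le_pos; [pose proof (Hs i i' Hii' Hi')|pose proof (Hu j j' Hjj' Hj')]; lra. }
    lra. }
  pose proof (monge_diag_optimal n (fun i j => - (s i * u j)) Hmonge P HP) as Hopt.
  cbv beta in Hopt.
  rewrite (rsum_ext n (fun i => / INR n * - (s i * u i)) (fun i => -1 * (/ INR n * (s i * u i))))
    in Hopt by (intros; ring).
  rewrite (rsum_ext n (fun i => rsum n (fun j => P i j * - (s i * u j)))
             (fun i => -1 * rsum n (fun j => P i j * (s i * u j)))) in Hopt.
  - rewrite !(rsum_mult_l n (-1)) in Hopt. lra.
  - intros i _. rewrite <- rsum_mult_l. apply rsum_ext. intros; ring.
Qed.

Section Atoms.

Variables (n : nat) (x : nat -> R).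

Definition atom_ind (i k : nat) : R := if Req_EM_T (x k) (x i) then 1 else 0.

Definition atom_size (i : nat) : R := rsum n (atom_ind i).

Definition atom_avg (i k : nat) : R := atom_ind i k / atom_size i.

Lemma atom_ind_nonneg i k : 0 <= atom_ind i k.
Proof. unfold atom_ind. destruct Req_EM_T; lra. Qed.

Lemma atom_size_pos i : (i < n)%nat -> 0 < atom_size i.
Proof.
  intros Hi. apply Rlt_le_trans with (atom_ind i i).
  - unfold atom_ind. destruct Req_EM_T; [lra|congruence].
  - apply rsum_ge_term; [intros; apply atom_ind_nonneg|exact Hi].
Qed.

Lemma atom_avg_nonneg i k : (i < n)%nat -> 0 <= atom_avg i k.
Proof.
  intros Hi. apply Rmult_le_pos; [apply atom_ind_nonneg|].
  apply Rlt_le, Rinv_0_lt_compat, atom_size_pos, Hi.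
Qed.

Lemma atom_avg_sym i k : atom_avg i k = atom_avg k i.
Proof.
  unfold atom_avg, atom_ind at 1 2.
  destruct (Req_EM_T (x k) (x i)) as [Heq|Hne], (Req_EM_T (x i) (x k)); try congruence.
  - unfold atom_size. f_equal. apply rsum_ext. intros l _. unfold atom_ind. now rewrite Heq.
  - unfold Rdiv. ring.
Qed.

Lemma atom_avg_sum_row i : (i < n)%nat -> rsum n (atom_avg i) = 1.
Proof.
  intros Hi. pose proof (atom_size_pos i Hi).
  rewrite (rsum_ext n _ (fun k => / atom_size i * atom_ind i k)) by (intros; unfold atom_avg, Rdiv; ring).
  rewrite rsum_mult_l. fold (atom_size i). field. lra.
Qed.

Lemma atom_avg_sum_col k : (k < n)%nat -> rsum n (fun i => atom_avg i k) = 1.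
Proof.
  intros Hk. rewrite (rsum_ext n _ (atom_avg k)) by (intros; apply atom_avg_sym).
  now apply atom_avg_sum_row.
Qed.

Lemma atom_avg_mean i : (i < n)%nat -> rsum n (fun k => atom_avg i k * x k) = x i.
Proof.
  intros Hi. rewrite (rsum_ext n _ (fun k => x i * atom_avg i k)).
  - rewrite rsum_mult_l, atom_avg_sum_row by exact Hi. ring.
  - intros k _. unfold atom_avg, atom_ind. destruct Req_EM_T as [->|]; unfold Rdiv; ring.
Qed.

Lemma rsum_atom_avg h : rsum n (fun i => rsum n (fun k => atom_avg i k * h k)) = rsum n h.
Proof.
  rewrite rsum_swap. apply rsum_ext. intros k Hk.
  rewrite (rsum_ext n _ (fun i => h k * atom_avg i k)) by (intros; ring).
  rewrite rsum_mult_l, atom_avg_sum_col by exact Hk. ring.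
Qed.

End Atoms.

(* Row [k] of a coupling has mass [/ INR n]; this is its normalised barycenter. *)
Definition row_bary (n : nat) (y : nat -> R) (P : nat -> nat -> R) (k : nat) : R :=
  INR n * rsum n (fun j => P k j * y j).

(* The weak cost as if all the [x k] were distinct atoms. *)
Definition rowwise_cost (th : R -> R) (n : nat) (x y : nat -> R) (P : nat -> nat -> R) : R :=
  rsum n (fun k => / INR n * th (x k - row_bary n y P k)).

Definition diag_cost (th : R -> R) (n : nat) (x y : nat -> R) : R :=
  rsum n (fun i => / INR n * th (x i - y i)).

Definition atom_average (n : nat) (x : nat -> R) (P : nat -> nat -> R) (k j : nat) : R :=
  rsum n (fun i => atom_avg n x k i * P i j).

Lemma kernel_bary_atom_avg n x y P i : (i < n)%nat ->
  kernel_bary n x y P (x i) = rsum n (fun k => atom_avg n x i k * row_bary n y P k).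
Proof.
  intros Hi. pose proof (atom_size_pos n x i Hi).
  assert (0 < INR n) by (apply lt_0_INR; lia).
  unfold kernel_bary, mu_mass.
  rewrite (rsum_ext n (fun k => if Req_EM_T (x k) (x i) then / INR n else 0)
             (fun k => / INR n * atom_ind x i k))
    by (intros; unfold atom_ind; destruct Req_EM_T; ring).
  rewrite (rsum_ext n (fun k => if Req_EM_T (x k) (x i) then rsum n (fun j => P k j * y j) else 0)
             (fun k => atom_ind x i k * rsum n (fun j => P k j * y j)))
    by (intros; unfold atom_ind; destruct Req_EM_T; ring).
  rewrite (rsum_ext n (fun k => atom_avg n x i k * row_bary n y P k)
             (fun k => INR n / atom_size n x i * (atom_ind x i k * rsum n (fun j => P k j * y j))))
    by (intros; unfold atom_avg, row_bary; field; lra).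
  rewrite !rsum_mult_l. fold (atom_size n x i). field. lra.
Qed.

Lemma row_bary_atom_average n x y P k :
  row_bary n y (atom_average n x P) k = rsum n (fun i => atom_avg n x k i * row_bary n y P i).
Proof.
  unfold row_bary, atom_average.
  rewrite (rsum_ext n (fun j => rsum n (fun i => atom_avg n x k i * P i j) * y j)
             (fun j => rsum n (fun i => atom_avg n x k i * (P i j * y j))))
    by (intros; rewrite Rmult_comm, <- rsum_mult_l; apply rsum_ext; intros; ring).
  rewrite rsum_swap, <- (rsum_mult_l n (INR n)). apply rsum_ext. intros i _.
  rewrite (rsum_mult_l n (atom_avg n x k i)). ring.
Qed.

Lemma atom_average_coupling n x P : is_coupling n P -> is_coupling n (atom_average n x P).
Proof.
  intros (Hpos & Hrow & Hcol). split; [|split].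
  - intros k j Hk Hj. apply rsum_nonneg. intros i Hi.
    apply Rmult_le_pos; [now apply atom_avg_nonneg|now apply Hpos].
  - intros k Hk. unfold atom_average. rewrite rsum_swap.
    rewrite (rsum_ext n _ (fun i => / INR n * atom_avg n x k i))
      by (intros; rewrite rsum_mult_l, Hrow by assumption; ring).
    rewrite rsum_mult_l, atom_avg_sum_row by exact Hk. ring.
  - intros j Hj. unfold atom_average. rewrite rsum_swap.
    rewrite <- (Hcol j Hj). apply rsum_ext. intros i Hi.
    rewrite (rsum_ext n _ (fun k => P i j * atom_avg n x k i)) by (intros; ring).
    rewrite rsum_mult_l, atom_avg_sum_col by exact Hi. ring.
Qed.

Lemma weak_cost_rowwise th n x y P : (forall z, th (- z) = th z) ->
  weak_cost th n x y P = rowwise_cost th n x y (atom_average n x P).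
Proof.
  intros Heven. apply rsum_ext. intros i Hi.
  rewrite even_Rabs, row_bary_atom_average, kernel_bary_atom_avg by assumption. reflexivity.
Qed.

Lemma weak_cost_le_rowwise th n x y P :
  convex th -> (forall z, th (- z) = th z) ->
  weak_cost th n x y P <= rowwise_cost th n x y P.
Proof.
  intros Hconv Heven. rewrite weak_cost_rowwise by exact Heven. unfold rowwise_cost.
  rewrite <- (rsum_atom_avg n x (fun k => / INR n * th (x k - row_bary n y P k))).
  apply rsum_le. intros k Hk.
  rewrite row_bary_atom_average, <- (atom_avg_mean n x k Hk) at 1.
  rewrite <- rsum_minus.
  rewrite (rsum_ext n _ (fun i => atom_avg n x k i * (x i - row_bary n y P i))) by (intros; ring).
  rewrite (rsum_ext n (fun i => atom_avg n x k i * (/ INR n * th (x i - row_bary n y P i)))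
             (fun i => / INR n * (atom_avg n x k i * th (x i - row_bary n y P i)))) by (intros; ring).
  rewrite rsum_mult_l. apply Rmult_le_compat_l.
  - apply Rlt_le, Rinv_0_lt_compat, lt_0_INR. lia.
  - apply jensen; [exact Hconv|intros; now apply atom_avg_nonneg|now apply atom_avg_sum_row].
Qed.

(* Tangent lines of [th] at the [x k - y k] give potentials [v |-> - s k * v], and
   [sum_k s k * row_bary k] is controlled by the rearrangement inequality. *)
Lemma rowwise_cost_ge_diag th n x y P :
  convex th -> nondecreasing_on n y -> nondecreasing_on n (fun k => x k - y k) ->
  is_coupling n P -> diag_cost th n x y <= rowwise_cost th n x y P.
Proof.
  intros Hconv Hy Hd HP.
  set (s := fun k => subgrad th Hconv (x k - y k)).
  assert (Hs : nondecreasing_on n s) by (intros i j Hij Hj; apply subgrad_nondecreasing, Hd; assumption).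
  apply Rle_trans with (rsum n (fun k => / INR n * th (x k - y k)
                          + (/ INR n * (s k * y k) - rsum n (fun j => P k j * (s k * y j))))).
  - rewrite rsum_plus, rsum_minus.
    pose proof (coupling_rearrangement n P s y HP Hs Hy). unfold diag_cost. lra.
  - apply rsum_le. intros k Hk.
    assert (HnR : 0 < INR n) by (apply lt_0_INR; lia).
    assert (Hrow : rsum n (fun j => P k j * (s k * y j)) = / INR n * (s k * row_bary n y P k)).
    { unfold row_bary. rewrite (rsum_ext n _ (fun j => s k * (P k j * y j))) by (intros; ring).
      rewrite rsum_mult_l. field. lra. }
    rewrite Hrow.
    pose proof (subgrad_supporting th Hconv (x k - y k) (x k - row_bary n y P k)) as Htan.
    apply (Rmult_le_compat_l (/ INR n)) in Htan; [|apply Rlt_le, Rinv_0_lt_compat, HnR].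
    fold (s k) in Htan. lra.
Qed.

Definition diag_coupling (n i j : nat) : R := / INR n * kron i j.

Lemma diag_coupling_coupling n : is_coupling n (diag_coupling n).
Proof.
  unfold diag_coupling. split; [|split].
  - intros i j Hi _. apply Rmult_le_pos.
    + apply Rlt_le, Rinv_0_lt_compat, lt_0_INR. lia.
    + unfold kron. destruct Nat.eqb; lra.
  - intros i Hi. rewrite rsum_mult_l, (rsum_ext n _ (fun j => kron j i)) by (intros; apply kron_sym).
    rewrite rsum_kron1 by exact Hi. ring.
  - intros j Hj. rewrite rsum_mult_l, rsum_kron1 by exact Hj. ring.
Qed.

Lemma row_bary_diag n y k : (k < n)%nat -> row_bary n y (diag_coupling n) k = y k.
Proof.
  intros Hk. assert (0 < INR n) by (apply lt_0_INR; lia).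
  unfold row_bary, diag_coupling.
  rewrite (rsum_ext n _ (fun j => / INR n * (kron j k * y j))) by (intros; rewrite kron_sym; ring).
  rewrite rsum_mult_l, rsum_kron by exact Hk. field. lra.
Qed.

Lemma rowwise_cost_diag th n x y : rowwise_cost th n x y (diag_coupling n) = diag_cost th n x y.
Proof. apply rsum_ext. intros k Hk. now rewrite row_bary_diag. Qed.

Lemma classical_cost_diag th n x y : (forall z, th (- z) = th z) ->
  classical_cost th n x y (diag_coupling n) = diag_cost th n x y.
Proof.
  intros Heven. apply rsum_ext. intros i Hi. unfold diag_coupling.
  rewrite (rsum_ext n _ (fun j => kron j i * (/ INR n * th (x i - y j))))
    by (intros; rewrite even_Rabs, kron_sym by exact Heven; ring).
  now rewrite rsum_kron.
Qed.

(* Moves mass [e / INR n] from [(a, a)] and [(b, b)] to [(a, b)] and [(b, a)]. *)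
Definition swap_coupling (n a b : nat) (e : R) (i j : nat) : R :=
  / INR n * (kron i j + e * (kron i a - kron i b) * (kron j b - kron j a)).

Lemma swap_coupling_coupling n a b e :
  (a < n)%nat -> (b < n)%nat -> a <> b -> 0 <= e <= 1 -> is_coupling n (swap_coupling n a b e).
Proof.
  intros Ha Hb Hab He. assert (0 < / INR n) by (apply Rinv_0_lt_compat, lt_0_INR; lia).
  unfold swap_coupling. split; [|split].
  - intros i j _ _. apply Rmult_le_pos; [lra|]. unfold kron.
    destruct (Nat.eqb_spec i j), (Nat.eqb_spec i a), (Nat.eqb_spec i b),
      (Nat.eqb_spec j a), (Nat.eqb_spec j b); subst; try lia; lra.
  - intros i Hi. rewrite rsum_mult_l.
    rewrite (rsum_ext n _ (fun j => kron j i + e * (kron i a - kron i b) * kron j b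
                                   - e * (kron i a - kron i b) * kron j a))
      by (intros; rewrite (kron_sym i); ring).
    rewrite rsum_minus, rsum_plus, !rsum_mult_l, !rsum_kron1 by assumption. ring.
  - intros j Hj. rewrite rsum_mult_l.
    rewrite (rsum_ext n _ (fun i => kron i j + e * (kron j b - kron j a) * kron i a
                                   - e * (kron j b - kron j a) * kron i b)) by (intros; ring).
    rewrite rsum_minus, rsum_plus, !rsum_mult_l, !rsum_kron1 by assumption. ring.
Qed.

Lemma row_bary_swap n y a b e k :
  (a < n)%nat -> (b < n)%nat -> (k < n)%nat ->
  row_bary n y (swap_coupling n a b e) k = y k + e * (kron k a - kron k b) * (y b - y a).
Proof.
  intros Ha Hb Hk. assert (0 < INR n) by (apply lt_0_INR; lia).
  unfold row_bary, swap_coupling.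
  rewrite (rsum_ext n _ (fun j => / INR n * (kron j k * y j)
                                 + / INR n * e * (kron k a - kron k b) * (kron j b * y j)
                                 - / INR n * e * (kron k a - kron k b) * (kron j a * y j)))
    by (intros; rewrite (kron_sym _ k); ring).
  rewrite rsum_minus, rsum_plus, !rsum_mult_l, !rsum_kron by assumption. field. lra.
Qed.

(* Where [x - y] decreases from [a] to [b], the swap with [e * (y b - y a)] equal to half
   the drop sends both [x a - row_bary a] and [x b - row_bary b] to the midpoint. *)
Lemma rowwise_cost_lt_diag th n x y a b :
  strictly_convex_cost th -> (a < n)%nat -> (b < n)%nat -> a <> b ->
  x a <= x b -> x b - y b < x a - y a ->
  exists P, is_coupling n P /\ rowwise_cost th n x y P < diag_cost th n x y.
Proof.
  intros Hth Ha Hb Hab Hx Hdrop.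
  set (D := y b - y a). set (e := ((x a - y a) - (x b - y b)) / (2 * D)).
  set (mid := ((x a - y a) + (x b - y b)) / 2).
  assert (HD : 0 < D) by (unfold D; lra).
  assert (HeD : e * D = ((x a - y a) - (x b - y b)) / 2) by (unfold e; field; lra).
  assert (He : 0 <= e <= 1).
  { split; apply (Rmult_le_reg_r D); try lra; rewrite HeD; unfold D; lra. }
  exists (swap_coupling n a b e). split; [now apply swap_coupling_coupling|].
  assert (Hrow_a : x a - row_bary n y (swap_coupling n a b e) a = mid).
  { rewrite row_bary_swap, kron_diag, (kron_neq a b) by assumption. fold D. unfold mid. lra. }
  assert (Hrow_b : x b - row_bary n y (swap_coupling n a b e) b = mid).
  { rewrite row_bary_swap, kron_diag, (kron_neq b a) by auto. fold D. unfold mid. lra. }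
  assert (Hdiff : rowwise_cost th n x y (swap_coupling n a b e) - diag_cost th n x y
                  = / INR n * (2 * th mid - th (x a - y a) - th (x b - y b))).
  { unfold rowwise_cost, diag_cost. rewrite <- rsum_minus, (rsum_supp2 n _ a b Ha Hb Hab).
    - rewrite Hrow_a, Hrow_b. ring.
    - intros k Hk Hka Hkb. rewrite row_bary_swap, !kron_neq by auto.
      replace (y k + e * (0 - 0) * (y b - y a)) with (y k) by ring. ring. }
  pose proof (strictly_convex_cost_midpoint th (x a - y a) (x b - y b) Hth ltac:(lra)) as Hmid.
  assert (Hinv : 0 < / INR n) by (apply Rinv_0_lt_compat, lt_0_INR; lia).
  fold mid in Hmid. nra.
Qed.

Lemma is_inf_of_min (S : R -> Prop) m : (forall s, S s -> m <= s) -> S m -> is_inf S m.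
Proof. intros Hlow Hm. split; [exact Hlow|]. intros b Hb. exact (Hb m Hm). Qed.

Lemma classical_cost_ge_diag th n x y P :
  strictly_convex_cost th -> nondecreasing_on n x -> nondecreasing_on n y ->
  is_coupling n P -> diag_cost th n x y <= classical_cost th n x y P.
Proof.
  intros Hth Hx Hy HP.
  assert (Heven : forall z, th (- z) = th z) by apply Hth.
  unfold classical_cost.
  rewrite (rsum_ext n _ (fun i => rsum n (fun j => P i j * th (x i - y j))))
    by (intros; apply rsum_ext; intros; now rewrite even_Rabs).
  apply (monge_diag_optimal n (fun i j => th (x i - y j))); [|exact HP].
  intros i i' j j' Hii' Hi' Hjj' Hj'.
  apply convex_monge; [now apply strictly_convex_cost_convex|now apply Hx|now apply Hy].
Qed.

Lemma classical_values_inf th n x y :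
  strictly_convex_cost th -> nondecreasing_on n x -> nondecreasing_on n y ->
  is_inf (classical_values th n x y) (diag_cost th n x y).
Proof.
  intros Hth Hx Hy. apply is_inf_of_min.
  - intros c (P & HP & ->). now apply classical_cost_ge_diag.
  - exists (diag_coupling n). split; [apply diag_coupling_coupling|].
    symmetry. apply classical_cost_diag, Hth.
Qed.

Lemma weak_values_inf th n x y :
  strictly_convex_cost th -> nondecreasing_on n y -> nondecreasing_on n (fun i => x i - y i) ->
  is_inf (weak_values th n x y) (diag_cost th n x y).
Proof.
  intros Hth Hy Hd.
  pose proof (strictly_convex_cost_convex th Hth) as Hconv.
  assert (Heven : forall z, th (- z) = th z) by apply Hth.
  assert (Hlow : forall c, weak_values th n x y c -> diag_cost th n x y <= c).
  { intros c (P & HP & ->). rewrite weak_cost_rowwise by exact Heven.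
    apply rowwise_cost_ge_diag; try assumption. now apply atom_average_coupling. }
  apply is_inf_of_min; [exact Hlow|].
  exists (diag_coupling n). split; [apply diag_coupling_coupling|].
  apply Rle_antisym.
  - apply Hlow. exists (diag_coupling n). split; [apply diag_coupling_coupling|reflexivity].
  - rewrite <- (rowwise_cost_diag th n x y). now apply weak_cost_le_rowwise.
Qed.

Theorem theorem2p7 (n : nat) (x y : nat -> R) (theta : R -> R)
  (Hn : (0 < n)%nat)
  (Hx : forall i j, (i <= j)%nat -> (j < n)%nat -> x i <= x j)
  (Hy : forall i j, (i <= j)%nat -> (j < n)%nat -> y i <= y j)
  (Htheta : strictly_convex_cost theta) :
  (forall i j, (i <= j)%nat -> (j < n)%nat -> x i - y i <= x j - y j)
  <->
  (exists m, is_inf (weak_values theta n x y) m /\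
             is_inf (classical_values theta n x y) m).
Proof.
  split.
  - intros Hd. exists (diag_cost theta n x y).
    split; [now apply weak_values_inf|now apply classical_values_inf].
  - intros (m & (Hweak_low & _) & (_ & Hclassical_glb)).
    assert (Hm : diag_cost theta n x y <= m)
      by (apply Hclassical_glb, classical_values_inf; assumption).
    apply nondecreasing_on_succ. intros k Hk.
    destruct (Rle_dec (x k - y k) (x (S k) - y (S k))) as [Hle|Hdrop]; [exact Hle|exfalso].
    destruct (rowwise_cost_lt_diag theta n x y k (S k) Htheta ltac:(lia) Hk ltac:(lia)
                (Hx k (S k) ltac:(lia) Hk) ltac:(lra)) as (P & HP & Hlt).
    assert (m <= weak_cost theta n x y P) by (apply Hweak_low; exists P; split; auto).
    assert (Heven : forall z, theta (- z) = theta z) by apply Htheta.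
    pose proof (weak_cost_le_rowwise theta n x y P (strictly_convex_cost_convex theta Htheta) Heven).
    lra.
Qed.
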